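(* Let $A$ be a finite alphabet, $f$ a bLSP morphism on $A$ and $a,b,c$ pairwise distinct letters of $A$. Then $f$ is LSP $(a,b,c)$-breaking if and only if the longest common prefix of $f(b)$ and $f(c)$ is strictly longer than the longest common prefix of $f(a)$ and $f(b)$.
   Context: A finite word $u$ is a left special factor of a word $w$ if there are distinct letters $x\neq y$ with $xu$ and $yu$ factors of $w$. A word is LSP if every left special factor of it is a prefix of it. A bLSP morphism on $A$ is an endomorphism $f$ of $A^*$ such that there is a letter $\alpha$ with $f(\alpha)=\alpha$ and, for every letter $\beta\neq\alpha$, there is a letter $\gamma$ with $f(\beta)=f(\gamma)\beta$. For pairwise distinct letters $a,b,c$, an infinite word $\mathbf{w}$ is $(a,b,c)$-fragile if there exist a finite word $u$ and distinct letters $\beta\neq\gamma$ such that $ua$ is a prefix of $\mathbf{w}$ and $\beta ub$, $\gamma uc$ are factors of $\mathbf{w}$. A morphism $f$ is LSP $(a,b,c)$-breaking if for every $(a,b,c)$-fragile infinite LSP word $\mathbf{w}$, $f(\mathbf{w})$ is not LSP. *)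

From mathcomp Require Import all_boot.
Set Implicit Arguments. Unset Strict Implicit. Unset Printing Implicit Defensive.

Section Words.
Variable A : finType.

Definition morph (f : A -> seq A) (w : seq A) : seq A := flatten (map f w).

Definition iword := nat -> A.

(* Image of an infinite word under a non-erasing morphism f:
   letter n of f(w) is letter n of f(w_0 ... w_n) (which has length >= n+1
   when f is non-erasing, as every bLSP morphism is). *)
Definition morph_inf (f : A -> seq A) (w : iword) : iword :=
  fun n => nth (w 0) (morph f (mkseq w n.+1)) n.

Definition iprefix (u : seq A) (w : iword) : Prop :=
  forall j, j < size u -> w j = nth (w 0) u j.

Definition ifactor (u : seq A) (w : iword) : Prop :=
  exists i, forall j, j < size u -> w (i + j) = nth (w 0) u j.

Definition left_special (u : seq A) (w : iword) : Prop :=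
  exists x y : A, x <> y /\ ifactor (x :: u) w /\ ifactor (y :: u) w.

Definition LSP (w : iword) : Prop :=
  forall u, left_special u w -> iprefix u w.

Definition bLSP (f : A -> seq A) : Prop :=
  exists alpha : A, f alpha = [:: alpha] /\
    forall beta, beta <> alpha -> exists gamma, f beta = f gamma ++ [:: beta].

Definition fragile (a b c : A) (w : iword) : Prop :=
  exists (u : seq A) (beta gamma : A), beta <> gamma /\
    iprefix (rcons u a) w /\ ifactor (beta :: rcons u b) w /\
    ifactor (gamma :: rcons u c) w.

Definition LSP_breaking (f : A -> seq A) (a b c : A) : Prop :=
  forall w : iword, fragile a b c w -> LSP w -> ~ LSP (morph_inf f w).

Fixpoint lcp (u v : seq A) : nat :=
  match u, v with
  | x :: u', y :: v' => if x == y then (lcp u' v').+1 else 0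
  | _, _ => 0
  end.

End Words.

From mathcomp Require Import all_boot zify.
Set Implicit Arguments. Unset Strict Implicit. Unset Printing Implicit Defensive.

(* Every image [f x] of a bLSP morphism begins with [alpha], ends with [x],
   contains [alpha] only at its first position, and each of its prefixes is
   again an image [f z].  Hence in [f w] a letter [z != alpha] is always
   preceded by the penultimate letter of [f z], and the images of two words
   beginning with distinct letters [x], [y] share exactly [lcp (f x) (f y)]
   letters.
   If [lcp (f a) (f b) < lcp (f b) (f c) = k], the word [u] witnessing
   fragility yields the left special factor [f u ++ take k (f b)] of [f w],
   which is not a prefix since [f w] continues [f u] with [f a] and then
   [alpha].  Otherwise [(abc)^omega] is fragile and LSP, and so is its image:
   a left special factor of it begins with [alpha] at the starts of the images
   of two distinct letters, so it is a common prefix of two of [f a], [f b],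
   [f c], hence a prefix of [f a]. *)

Section LongestCommonPrefix.
Variable A : finType.
Implicit Types r s t : seq A.

Lemma lcpC s t : lcp s t = lcp t s.
Proof. by elim: s t => [|x s IHs] [|y t] //=; rewrite eq_sym IHs. Qed.

Lemma leq_lcp n s t :
  (n <= lcp s t) = [&& n <= size s, n <= size t & take n s == take n t].
Proof.
elim: s t n => [|x s IHs] [|y t] [|n] //=; rewrite ?andbF // eqseq_cons.
by case: eqP => //= _; rewrite !ltnS ?IHs ?andbF.
Qed.

Lemma lcpss s : lcp s s = size s.
Proof. by elim: s => //= x s ->; rewrite eqxx. Qed.

Lemma lcp_sizel s t : lcp s t <= size s.
Proof. by have := leqnn (lcp s t); rewrite leq_lcp => /and3P[]. Qed.

Lemma lcp_sizer s t : lcp s t <= size t.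
Proof. by rewrite lcpC lcp_sizel. Qed.

Lemma take_lcp s t : take (lcp s t) s = take (lcp s t) t.
Proof. by have := leqnn (lcp s t); rewrite leq_lcp => /and3P[_ _ /eqP]. Qed.

Lemma lcp_trans n r s t : n <= lcp r s -> n <= lcp s t -> n <= lcp r t.
Proof.
rewrite !leq_lcp => /and3P[-> _ /eqP->] /and3P[_ -> /eqP->]; by rewrite eqxx.
Qed.

Lemma lcp_catl p s t : lcp (p ++ s) (p ++ t) = size p + lcp s t.
Proof. by elim: p => //= x p ->; rewrite eqxx. Qed.

Lemma lcp_cat s t r r' :
  lcp s t < size s -> lcp s t < size t -> lcp (s ++ r) (t ++ r') = lcp s t.
Proof.
elim: s t => [|x s IHs] [|y t] //=; case: eqP => //= _.
by rewrite !ltnS => /IHs lt_s /lt_s ->.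
Qed.

End LongestCommonPrefix.

Section InfiniteWords.
Variable A : finType.
Implicit Types (s t r : seq A) (w : iword A).

Definition ishift w i : iword A := fun n => w (i + n).

Lemma mkseqD w m n : mkseq w (m + n) = mkseq w m ++ mkseq (ishift w m) n.
Proof. by rewrite /mkseq iotaD map_cat add0n -[m]addn0 iotaDl -map_comp addn0. Qed.

Lemma iprefixP s w : iprefix s w <-> mkseq w (size s) = s.
Proof.
split=> [pre_s | <- j]; last by rewrite size_mkseq => lt_j; rewrite nth_mkseq.
apply: (@eq_from_nth _ (w 0)); rewrite size_mkseq // => j lt_j.
by rewrite nth_mkseq // pre_s.
Qed.

Lemma ifactorP s w : ifactor s w <-> exists i, iprefix s (ishift w i).
Proof.
split=> -[i fac]; exists i => j lt_j; have := fac j lt_j; rewrite /ishift => ->;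
  exact: set_nth_default.
Qed.

Lemma iprefix_take n s w : iprefix s w -> iprefix (take n s) w.
Proof.
move=> pre_s j; rewrite size_take_min leq_min => /andP[lt_jn /pre_s->].
by rewrite nth_take.
Qed.

Lemma iprefix_catl s t w : iprefix (s ++ t) w -> iprefix s w.
Proof. by move=> /(iprefix_take (n := size s)); rewrite take_size_cat. Qed.

Lemma iprefix_catr s t w i :
  iprefix (s ++ t) (ishift w i) -> iprefix t (ishift w (i + size s)).
Proof.
move=> pre_st j lt_j; rewrite /ishift -addnA.
have := pre_st (size s + j); rewrite /ishift => ->; last by rewrite size_cat ltn_add2l.
by rewrite nth_cat ltnNge leq_addr addKn /=; apply: set_nth_default.
Qed.

Lemma iprefix_lcp s t w :
  iprefix s w -> iprefix t w -> minn (size s) (size t) <= lcp s t.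
Proof.
set n := minn _ _; have le_ns : n <= size s by rewrite geq_minl.
have le_nt : n <= size t by rewrite geq_minr.
move=> /(iprefix_take (n := n))/iprefixP; rewrite size_takel // => eq_ns.
move=> /(iprefix_take (n := n))/iprefixP; rewrite size_takel // => eq_nt.
by rewrite leq_lcp le_ns le_nt -eq_ns -eq_nt eqxx.
Qed.

Lemma iprefix_of_lcp s t w : iprefix t w -> size s <= lcp s t -> iprefix s w.
Proof.
move=> pre_t; rewrite leq_lcp => /and3P[_ _ /eqP].
by rewrite take_size => ->; apply: iprefix_take.
Qed.

Lemma ifactor_infix s t w : infix s t -> ifactor t w -> ifactor s w.
Proof.
case/infixP=> [r [r' ->]] /ifactorP[i pre]; apply/ifactorP; exists (i + size r).
exact/(iprefix_catl (t := r'))/iprefix_catr.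
Qed.

Lemma LSP_of_pred_determined w :
  (forall m m', w m.+1 = w m'.+1 -> w m = w m') -> LSP w.
Proof.
move=> pred_w [|z s] [x [y [ne_xy [[i fx] [i' fy]]]]]; first by case.
case: ne_xy; move: (fx 0 isT) (fy 0 isT); rewrite !addn0 /= => <- <-.
by apply: pred_w; rewrite -[i.+1]addn1 -[i'.+1]addn1 (fx 1) // (fy 1).
Qed.

End InfiniteWords.

Section Morphism.
Variables (A : finType) (f : A -> seq A).

Lemma morph_cat s t : morph f (s ++ t) = morph f s ++ morph f t.
Proof. by rewrite /morph map_cat flatten_cat. Qed.

Lemma morph_cons x s : morph f (x :: s) = f x ++ morph f s.
Proof. by []. Qed.

Lemma morph_seq1 x : morph f [:: x] = f x.
Proof. exact: cats0. Qed.

Hypothesis f_nonerasing : forall x, 0 < size (f x).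

Lemma size_morph s : size s <= size (morph f s).
Proof. by elim: s => //= x s IHs; rewrite size_cat -add1n leq_add. Qed.

Variable w : iword A.
Local Notation W := (morph_inf f w).

Definition morph_index m := size (morph f (mkseq w m)).

Lemma morph_indexS m : morph_index m.+1 = morph_index m + size (f (w m)).
Proof. by rewrite /morph_index mkseqS -cats1 morph_cat size_cat morph_seq1. Qed.

Lemma morph_inf_prefix n : iprefix (morph f (mkseq w n)) W.
Proof.
move=> j lt_j; rewrite (set_nth_default (w 0)) // /morph_inf.
have nth_mkseq_le k l : k <= l -> j < size (morph f (mkseq w k)) ->
    nth (w 0) (morph f (mkseq w l)) j = nth (w 0) (morph f (mkseq w k)) j.
  by move=> /subnKC <- lt_jk; rewrite mkseqD morph_cat nth_cat lt_jk.
have lt_jS : j < size (morph f (mkseq w j.+1)).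
  by have := size_morph (mkseq w j.+1); rewrite size_mkseq.
case: (leqP n j.+1) => [/nth_mkseq_le/(_ lt_j)-> // | /ltnW/nth_mkseq_le].
by move/(_ lt_jS)<-.
Qed.

Lemma morph_inf_block m n :
  iprefix (morph f (mkseq (ishift w m) n)) (ishift W (morph_index m)).
Proof.
have := morph_inf_prefix (n := m + n); rewrite mkseqD morph_cat.
exact: (iprefix_catr (i := 0)).
Qed.

Lemma morph_inf_letter m : iprefix (f (w m)) (ishift W (morph_index m)).
Proof.
by have := morph_inf_block (m := m) (n := 1); rewrite /mkseq /= {1}/ishift addn0 morph_seq1.
Qed.

Lemma morph_inf_nth d m o :
  o < size (f (w m)) -> W (morph_index m + o) = nth d (f (w m)) o.
Proof.
by move=> lt_o; have := morph_inf_letter lt_o; rewrite /ishift => ->; apply: set_nth_default.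
Qed.

Lemma morph_inf_decomp p : exists m o, o < size (f (w m)) /\ p = morph_index m + o.
Proof.
elim: p => [|p [m [o [lt_o ->]]]]; first by exists 0, 0.
case: (ltnP o.+1 (size (f (w m)))) => [lt_o1 | le_o1].
  by exists m, o.+1; rewrite addnS.
exists m.+1, 0; rewrite morph_indexS addn0 -addnS; split=> //.
by congr (_ + _); apply/eqP; rewrite eqn_leq lt_o le_o1.
Qed.

Lemma ifactor_morph s : ifactor s w -> ifactor (morph f s) W.
Proof.
case/ifactorP=> i /iprefixP pre_s; apply/ifactorP; exists (morph_index i).
by rewrite -pre_s; apply: morph_inf_block.
Qed.

End Morphism.

Section BLSPMorphism.
Variables (A : finType) (f : A -> seq A) (alpha : A).
Hypothesis f_alpha : f alpha = [:: alpha].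
Hypothesis f_step : forall x, x <> alpha -> exists y, f x = f y ++ [:: x].

Lemma bLSP_rcons x : exists t, f x = rcons t x.
Proof.
have [-> | /eqP/f_step[y ->]] := eqVneq x alpha; last by exists (f y); rewrite cats1.
by exists [::]; rewrite f_alpha.
Qed.

Lemma last_bLSP x : last alpha (f x) = x.
Proof. by have [t ->] := bLSP_rcons x; rewrite last_rcons. Qed.

Lemma bLSP_inj : injective f.
Proof. by move=> x y /(congr1 (last alpha)); rewrite !last_bLSP. Qed.

Lemma bLSP_nonerasing x : 0 < size (f x).
Proof. by have [t ->] := bLSP_rcons x; rewrite size_rcons. Qed.

Lemma size_bLSP_eq1 x : size (f x) = 1 -> x = alpha.
Proof.
have [// | /eqP/f_step[y ->]] := eqVneq x alpha.
by rewrite size_cat addn1 => -[fy0]; have := bLSP_nonerasing y; rewrite fy0.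
Qed.

Lemma take_bLSP x j : j < size (f x) -> take j.+1 (f x) = f (nth alpha (f x) j).
Proof.
have [n] := ubnP (size (f x)); elim: n x => // n IHn x lt_xn lt_j.
have [x_alpha | /eqP/f_step[y fx]] := eqVneq x alpha.
  by rewrite x_alpha f_alpha /= in lt_j *; have -> : j = 0 by lia.
move: lt_j lt_xn; rewrite fx size_cat addn1 !ltnS leq_eqVlt => /predU1P[-> | lt_jy] lt_yn.
  by rewrite take_oversize ?size_cat ?addn1 // nth_cat ltnn subnn -fx.
by rewrite takel_cat // nth_cat lt_jy IHn.
Qed.

Lemma nth_bLSP_eq_alpha x j : j < size (f x) -> (nth alpha (f x) j == alpha) = (j == 0).
Proof.
move=> lt_j; have size_j : size (f (nth alpha (f x) j)) = j.+1.
  by rewrite -take_bLSP // size_takel.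
apply/eqP/eqP => [z_alpha | j0]; first by move: size_j; rewrite z_alpha f_alpha => -[].
by apply: size_bLSP_eq1; rewrite size_j j0.
Qed.

Lemma nth_bLSP_pred x j : 0 < j < size (f x) ->
  nth alpha (f x) j.-1 =
  nth alpha (f (nth alpha (f x) j)) (size (f (nth alpha (f x) j))).-2.
Proof.
move=> /andP[j_gt0 lt_j]; rewrite -take_bLSP // size_takel //=.
by rewrite nth_take // prednK.
Qed.

Lemma head_morph s : head alpha (morph f s) = alpha.
Proof.
case: s => [|x s] //=; have lt_0 := bLSP_nonerasing x.
by rewrite -nth0 nth_cat lt_0; apply/eqP; rewrite nth_bLSP_eq_alpha.
Qed.

Lemma lcp_morph_prefix x y s t : x != y -> lcp (f x) (f y) = size (f x) ->
  lcp (morph f (x :: s)) (morph f (y :: t)) = size (f x).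
Proof.
move=> ne_xy eq_l; have fx : take (size (f x)) (f y) = f x.
  by rewrite -eq_l -take_lcp eq_l take_size.
have lt_xy : size (f x) < size (f y).
  rewrite ltn_neqAle -{2}eq_l lcp_sizer andbT; apply: contra ne_xy => /eqP eq_size.
  by apply/eqP/bLSP_inj; rewrite -fx eq_size take_size.
have y_not_alpha : nth alpha (f y) (size (f x)) != alpha.
  by rewrite nth_bLSP_eq_alpha // -lt0n bLSP_nonerasing.
rewrite !morph_cons -(cat_take_drop (size (f x)) (f y)) fx (drop_nth alpha lt_xy) -catA.
rewrite lcp_catl -[RHS]addn0; congr (_ + _).
move: (head_morph s) y_not_alpha; case: (morph f s) => //= z r ->.
by rewrite eq_sym => /negbTE->.
Qed.

Lemma lcp_morph_cons x y s t :
  x != y -> lcp (morph f (x :: s)) (morph f (y :: t)) = lcp (f x) (f y).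
Proof.
move=> ne_xy; have [lt_x | ge_x] := ltnP (lcp (f x) (f y)) (size (f x)); last first.
  have eq_l : lcp (f x) (f y) = size (f x) by apply/eqP; rewrite eqn_leq lcp_sizel.
  by rewrite eq_l lcp_morph_prefix.
have [lt_y | ge_y] := ltnP (lcp (f x) (f y)) (size (f y)); first exact: lcp_cat.
have eq_l : lcp (f y) (f x) = size (f y) by apply/eqP; rewrite eqn_leq lcp_sizel lcpC.
by rewrite lcpC (lcpC (f x)) eq_l lcp_morph_prefix // eq_sym.
Qed.

Lemma LSP_breaking_of_lcp a b c :
  lcp (f a) (f b) < lcp (f b) (f c) -> LSP_breaking f a b c.
Proof.
move=> lt_lcp w [u [x [y [ne_xy [pre_ua [fac_x fac_y]]]]]] _ LSP_W.
have ne_ab : a != b.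
  by apply: contraTneq lt_lcp => ->; rewrite lcpss -leqNgt lcp_sizel.
set k := lcp (f b) (f c) in lt_lcp *; set j := lcp (f a) (f b) in lt_lcp *.
have fac_take z v : ifactor (z :: rcons u v) w ->
    ifactor (z :: morph f u ++ take k (f v)) (morph_inf f w).
  move/(ifactor_morph bLSP_nonerasing); apply: ifactor_infix.
  rewrite morph_cons; have [t ->] := bLSP_rcons z.
  rewrite -[rcons u v]cats1 morph_cat morph_seq1 -{2}(cat_take_drop k (f v)).
  by rewrite cat_rcons catA infix_infix.
have pre_b : iprefix (morph f u ++ take k (f b)) (morph_inf f w).
  apply: LSP_W; exists x, y; split=> //; split; first exact: fac_take.
  by rewrite /k take_lcp; apply: fac_take.
set d := w (size u).+1.
have pre_ad : iprefix (morph f u ++ morph f [:: a; d]) (morph_inf f w).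
  have /iprefixP := pre_ua; rewrite size_rcons => ua.
  rewrite -morph_cat -cat_rcons -ua cats1 -mkseqS.
  exact: (morph_inf_prefix bLSP_nonerasing).
have := iprefix_lcp pre_ad pre_b.
rewrite lcp_catl !(size_cat (morph f u)) -addn_minr leq_add2l => le_min.
have le_kb : k <= size (f b) := lcp_sizel _ _.
have lt_j_min : j < minn (size (morph f [:: a; d])) (size (take k (f b))).
  rewrite leq_min size_takel // lt_lcp andbT morph_cons size_cat morph_seq1.
  by rewrite -[j.+1]addn1 leq_add ?lcp_sizel ?bLSP_nonerasing.
have lt_j_take : j < lcp (take k (f b)) (f b).
  by rewrite leq_lcp size_takel // lt_lcp (leq_trans lt_lcp) //= take_takel.
have := lcp_trans (leq_trans lt_j_min le_min) lt_j_take.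
by rewrite -(morph_seq1 f b) lcp_morph_cons // ltnn.
Qed.

Section Image.
Variable w : iword A.
Local Notation W := (morph_inf f w).
Local Notation idx := (morph_index f w).

Lemma morph_inf_pred i : W i.+1 != alpha ->
  W i = nth alpha (f (W i.+1)) (size (f (W i.+1))).-2.
Proof.
have [m [o [lt_o eq_i]]] := morph_inf_decomp bLSP_nonerasing w i.+1.
rewrite eq_i (morph_inf_nth bLSP_nonerasing alpha lt_o) nth_bLSP_eq_alpha // => o_neq0.
have o_gt0 : 0 < o by rewrite lt0n.
have -> : i = idx m + o.-1 by lia.
rewrite (morph_inf_nth bLSP_nonerasing alpha (leq_ltn_trans (leq_pred o) lt_o)).
by rewrite nth_bLSP_pred // o_gt0.
Qed.

Lemma morph_inf_alpha i : W i.+1 = alpha -> exists m, i.+1 = idx m.+1 /\ W i = w m.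
Proof.
move=> W_alpha; have [m [o [lt_o eq_i]]] := morph_inf_decomp bLSP_nonerasing w i.+1.
have o0 : o = 0.
  apply/eqP; rewrite -(nth_bLSP_eq_alpha lt_o).
  by rewrite -(morph_inf_nth bLSP_nonerasing alpha lt_o) -eq_i W_alpha.
rewrite o0 addn0 in eq_i; case: m eq_i {lt_o} => [|m eq_i]; first by rewrite /morph_index.
exists m; split=> //.
have -> : i = idx m + (size (f (w m))).-1.
  by move: eq_i (bLSP_nonerasing (w m)); rewrite morph_indexS; lia.
rewrite (morph_inf_nth bLSP_nonerasing alpha) ?prednK ?bLSP_nonerasing //.
by rewrite nth_last last_bLSP.
Qed.

Lemma lcp_blocks m m' s : w m != w m' ->
  iprefix s (ishift W (idx m)) -> iprefix s (ishift W (idx m')) ->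
  size s <= lcp (f (w m)) (f (w m')).
Proof.
case: s => [//|z s] ne_m.
have lcp_block k : iprefix (z :: s) (ishift W (idx k)) ->
    (size s).+1 <= lcp (z :: s) (morph f (mkseq (ishift w k) (size s).+1)).
  move=> pre_k.
  have := iprefix_lcp pre_k (morph_inf_block bLSP_nonerasing (m := k) (n := (size s).+1)).
  by rewrite (minn_idPl _) // (leq_trans _ (size_morph bLSP_nonerasing _)) ?size_mkseq.
move=> /lcp_block le_m /lcp_block le_m'; rewrite lcpC in le_m.
by have := lcp_trans le_m le_m'; rewrite /mkseq /= /ishift !addn0 lcp_morph_cons.
Qed.

Lemma LSP_morph_inf :
  (forall m m', w m.+1 = w m'.+1 -> w m = w m') ->
  (forall m m', w m != w m' -> lcp (f (w m)) (f (w m')) <= lcp (f (w 0)) (f (w m))) ->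
  LSP W.
Proof.
move=> pred_w lcp_w [|z s] [x [y [ne_xy [/ifactorP[i pre_i] /ifactorP[i' pre_i']]]]].
  by case.
have W_x : W i = x by have := pre_i 0 isT; rewrite /ishift addn0.
have W_y : W i' = y by have := pre_i' 0 isT; rewrite /ishift addn0.
have W_z : W i.+1 = z by have := pre_i 1 isT; rewrite /ishift addn1.
have W_z' : W i'.+1 = z by have := pre_i' 1 isT; rewrite /ishift addn1.
have [z_alpha | z_neq] := eqVneq z alpha; last first.
  case: ne_xy; rewrite -W_x -W_y (morph_inf_pred (i := i)) ?W_z //.
  by rewrite (morph_inf_pred (i := i')) W_z'.
have [m [eq_m W_m]] := morph_inf_alpha (etrans W_z z_alpha).
have [m' [eq_m' W_m']] := morph_inf_alpha (etrans W_z' z_alpha).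
have ne_m : w m.+1 != w m'.+1 by apply/eqP => /pred_w; rewrite -W_m -W_m' W_x W_y.
have pre_m : iprefix (z :: s) (ishift W (idx m.+1)).
  by rewrite -eq_m -[i.+1]addn1; apply: (iprefix_catr (s := [:: x])).
have pre_m' : iprefix (z :: s) (ishift W (idx m'.+1)).
  by rewrite -eq_m' -[i'.+1]addn1; apply: (iprefix_catr (s := [:: y])).
have le_lcp := leq_trans (lcp_blocks ne_m pre_m pre_m') (lcp_w _ _ ne_m).
apply: (iprefix_of_lcp (t := f (w 0))).
  exact: (morph_inf_letter bLSP_nonerasing (m := 0)).
apply: lcp_trans (_ : _ <= lcp (f (w m.+1)) _); last by rewrite lcpC.
have := iprefix_lcp pre_m (morph_inf_letter bLSP_nonerasing (m := m.+1)).
by rewrite (minn_idPl _) // (leq_trans le_lcp) ?lcp_sizer.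
Qed.

End Image.

End BLSPMorphism.

Section PeriodicWitness.
Variables (A : finType) (a b c : A).
Hypotheses (ne_ab : a <> b) (ne_bc : b <> c) (ne_ac : a <> c).

Definition abc_word : iword A := fun n => nth a [:: a; b; c] (n %% 3).

Lemma abc_word_mem n : abc_word n \in [:: a; b; c].
Proof. by rewrite mem_nth // ltn_mod. Qed.

Lemma abc_word_pred m m' : abc_word m.+1 = abc_word m'.+1 -> abc_word m = abc_word m'.
Proof.
have uniq_abc : uniq [:: a; b; c].
  by rewrite /= !inE (introF eqP ne_ab) (introF eqP ne_ac) (introF eqP ne_bc).
rewrite /abc_word => /eqP; rewrite nth_uniq ?ltn_mod //.
by rewrite -[m.+1]addn1 -[m'.+1]addn1 eqn_modDr => /eqP->.
Qed.

Lemma abc_word_fragile : fragile a b c abc_word.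
Proof.
exists [::], a, b; split=> //; split; first by case.
by split; [exists 0 | exists 1]; case=> [|[|]].
Qed.

Lemma lcp_abc_word (f : A -> seq A) : lcp (f b) (f c) <= lcp (f a) (f b) ->
  forall m m', abc_word m != abc_word m' ->
  lcp (f (abc_word m)) (f (abc_word m')) <= lcp (f (abc_word 0)) (f (abc_word m)).
Proof.
rewrite -[abc_word 0]/a => le_bc m m'.
have lcp_cb : lcp (f c) (f b) <= lcp (f a) (f c).
  by apply: (lcp_trans (s := f b)); rewrite lcpC.
move: (abc_word_mem m) (abc_word_mem m'); rewrite !inE.
case/or3P=> /eqP-> /or3P[] /eqP->; rewrite ?eqxx // => _;
  by rewrite ?lcpss ?lcp_sizel // lcpC.
Qed.

End PeriodicWitness.

Theorem corollary1 (A : finType) (f : A -> seq A) (a b c : A) :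
  bLSP f -> a <> b -> b <> c -> a <> c ->
  (LSP_breaking f a b c <-> lcp (f a) (f b) < lcp (f b) (f c)).
Proof.
move=> [alpha [f_alpha f_step]] ne_ab ne_bc ne_ac.
split=> [breaking | ]; last exact: (LSP_breaking_of_lcp f_alpha f_step).
rewrite ltnNge; apply/negP => le_bc.
apply: (breaking (abc_word a b c)); first exact: abc_word_fragile.
  exact/LSP_of_pred_determined/abc_word_pred.
apply: (LSP_morph_inf f_alpha f_step (abc_word_pred ne_ab ne_bc ne_ac)).
exact: lcp_abc_word.
Qed.
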